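(* Let $t \geq 1$ and $p \geq 3$ be integers. Let $m_1, \dots, m_p$ be distinct real numbers and $c_1, \dots, c_p$ be distinct real numbers. For $i, j \in [p]$ let $L_{i,j}$ be the line $\{(x, m_i x + c_j) : x \in \mathbb{R}\} \subseteq \mathbb{R}^2$, and let $A_{i,j}$ be the set of points $(a,b) \in \mathbb{R}^2$ for which there exist $i', j' \in [p]$ with $(i',j') \neq (i,j)$ such that $L_{i,j}$ and $L_{i',j'}$ intersect at $(a,b)$. To each point $(a,b)$ in $\bigcup_{i,j} A_{i,j}$ assign a $t$-element set $T_{(a,b)}$, these sets being pairwise disjoint, and let $B_{i,j} = \bigcup_{(a,b) \in A_{i,j}} T_{(a,b)}$. Let $\mathcal{B} = \{B_{i,j} : i, j \in [p]\}$. Let $\mathcal{L}$ be a largest $t$-intersecting sub-family of $\mathcal{B}$, let $k \geq 1$ be an integer and let $\mathcal{A}_1, \dots, \mathcal{A}_k$ be cross-$t$-intersecting sub-families of $\mathcal{B}$. Then: (i) $\kappa(\mathcal{B},t) = |\mathcal{L}| = p$; (ii) if $k \geq \kappa(\mathcal{B},t)$ and $\mathcal{A}_1 = \dots = \mathcal{A}_k = \mathcal{L}$, then $\prod_{i=1}^k |\mathcal{A}_i|$ is maximum among all $k$-tuples of cross-$t$-intersecting sub-families of $\mathcal{B}$; (iii) if $k < \kappa(\mathcal{B},t)$ and $\mathcal{A}_1 = \dots = \mathcal{A}_k = \mathcal{L}$, then $\prod_{i=1}^k |\mathcal{A}_i|$ is not maximum among all $k$-tuples of cross-$t$-intersecting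 sub-families of $\mathcal{B}$.
   Context: $[p] = \{1,\dots,p\}$. A family $\mathcal{A}$ is $t$-intersecting if $|A \cap B| \geq t$ for all $A, B \in \mathcal{A}$ with $A \neq B$. Families $\mathcal{A}_1, \dots, \mathcal{A}_k$ (not necessarily distinct or non-empty) are cross-$t$-intersecting if for all $i \neq j$, $|A \cap B| \geq t$ for every $A \in \mathcal{A}_i$, $B \in \mathcal{A}_j$. $l(\mathcal{F},t)$ is the size of a largest $t$-intersecting sub-family of $\mathcal{F}$. For a family $\mathcal{A}$, $\mathcal{A}^{t,+} = \{A \in \mathcal{A} : |A \cap B| \geq t \text{ for all } B \in \mathcal{A}\setminus\{A\}\}$ and $\mathcal{A}^{t,-} = \mathcal{A} \setminus \mathcal{A}^{t,+}$. For $\mathcal{A} \subseteq \mathcal{F}$, $\beta(\mathcal{F},t,\mathcal{A}) = \frac{l(\mathcal{F},t) - |\mathcal{A}^{t,+}|}{|\mathcal{A}^{t,-}|}$ if $\mathcal{A}^{t,-} \neq \emptyset$, and $\frac{l(\mathcal{F},t)}{|\mathcal{F}|}$ otherwise; $\beta(\mathcal{F},t) = \min_{\mathcal{A} \subseteq \mathcal{F}} \beta(\mathcal{F},t,\mathcal{A})$ and $\kappa(\mathcal{F},t) = 1/\beta(\mathcal{F},t)$. *)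

From HB Require Import structures.
From mathcomp Require Import all_boot all_order all_algebra.
From mathcomp Require Import boolp reals.
Set Implicit Arguments. Unset Strict Implicit. Unset Printing Implicit Defensive.
Import Order.TTheory GRing.Theory Num.Theory.
Local Open Scope ring_scope.

Section Families.
Variable U : finType.

Definition t_intersecting (t : nat) (F : {set {set U}}) : bool :=
  [forall A in F, forall B in F, (A != B) ==> (t <= #|A :&: B|)%N].

Definition cross_t_intersecting (t k : nat) (As : 'I_k -> {set {set U}}) : Prop :=
  forall i j : 'I_k, i != j ->
    forall A B, A \in As i -> B \in As j -> (t <= #|A :&: B|)%N.

Definition lsize (F : {set {set U}}) (t : nat) : nat :=
  \max_(G in powerset F | t_intersecting t G) #|G|.

Definition fam_plus (A : {set {set U}}) (t : nat) : {set {set U}} :=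
  [set X in A | [forall Y in A :\ X, (t <= #|X :&: Y|)%N]].
Definition fam_minus (A : {set {set U}}) (t : nat) : {set {set U}} :=
  A :\: fam_plus A t.

Definition beta_at (F : {set {set U}}) (t : nat) (A : {set {set U}}) : rat :=
  if fam_minus A t != set0 then
    ((lsize F t)%:R - #|fam_plus A t|%:R) / #|fam_minus A t|%:R
  else (lsize F t)%:R / #|F|%:R.

(* beta(F,t) = min over A subset of F; the index set is nonempty (it contains
   A = set0, whose value is l(F,t)/|F|), so that value serves as the neutral
   element without changing the minimum. *)
Definition beta (F : {set {set U}}) (t : nat) : rat :=
  \big[Num.min/((lsize F t)%:R / #|F|%:R)]_(A in powerset F) beta_at F t A.

Definition kappa (F : {set {set U}}) (t : nat) : rat := (beta F t)^-1.

End Families.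

Section Geometry.
Variable R : realType.

Definition line (m c : R) : pred (R * R) := fun P => P.2 == m * P.1 + c.

Variables (p : nat) (m c : 'I_p -> R).

Definition Lij (i j : 'I_p) : pred (R * R) := line (m i) (c j).

Definition Aij (i j : 'I_p) : pred (R * R) := fun P =>
  [exists i' : 'I_p, exists j' : 'I_p,
     [&& (i', j') != (i, j), P \in Lij i j & P \in Lij i' j']].

Definition inA (P : R * R) : bool := [exists i : 'I_p, exists j : 'I_p, Aij i j P].

Variables (U : finType) (T : R * R -> {set U}).

Definition Bij (i j : 'I_p) : {set U} :=
  [set u | `[< exists P, Aij i j P /\ u \in T P >] ].

Definition Bfam : {set {set U}} := [set Bij i j | i : 'I_p, j : 'I_p].

End Geometry.

From HB Require Import structures.
From mathcomp Require Import all_boot all_order all_algebra.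
From mathcomp Require Import boolp reals lra.
Import Order.TTheory GRing.Theory Num.Theory.
Local Open Scope ring_scope.
Set Implicit Arguments. Unset Strict Implicit.

(* Two blocks B_{i,j} and B_{i',j'} share at least t points exactly when i != i' or
   (i,j) = (i',j'): non-parallel lines meet in a point whose t-set lies in both blocks,
   while parallel lines have no common intersection point.  So B is a p x p grid in
   which a row (a slope class) contains no two t-intersecting members and members of
   distinct rows always t-intersect.  Hence a t-intersecting family meets each row at
   most once (l(B,t) = p), and each row adds at most p to |A^{t,-}| + p |A^{t,+}|,
   which gives beta(B,t) = 1/p.  When k >= p, cross-t-intersecting families take at
   most k members of each row altogether, so sum |A_i| <= kp and AM-GM bounds the
   product by p^k; when k < p, splitting the rows among k families by residue mod k
   gives every family a full row and the first one two, beating p^k. *)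

Lemma exists_ord_neq p (i : 'I_p) : (1 < p)%N -> exists i' : 'I_p, i' != i.
Proof.
move=> p_gt1; have p_gt0 := ltnW p_gt1.
have [->|i_neq0] := eqVneq i (Ordinal p_gt0).
  by exists (Ordinal p_gt1); apply/eqP => /(congr1 val).
by exists (Ordinal p_gt0); rewrite eq_sym i_neq0.
Qed.

Lemma prod_leq_expn_of_sum k (a : 'I_k -> nat) n :
  (\sum_(i < k) a i <= k * n)%N -> (\prod_(i < k) a i <= n ^ k)%N.
Proof.
case: k a => [|k] a hsum; first by rewrite big_ord0.
have a_ge0 i : i \in predT -> 0 <= (a i)%:R :> rat by rewrite ler0n.
have [amgm _] := leif_AGM a_ge0; rewrite card_ord in amgm.
rewrite -(ler_nat rat) natr_prod natrX (le_trans amgm) //.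
rewrite lerXn2r ?nnegrE ?divr_ge0 ?sumr_ge0 //.
by rewrite ler_pdivrMr ?ltr0n // -natr_sum -natrM ler_nat mulnC.
Qed.

Section Grid.
Variables (U : finType) (t p : nat) (B : 'I_p -> 'I_p -> {set U}).
Hypothesis p_gt1 : (1 < p)%N.
Hypothesis meetB : forall i j i' j',
  (t <= #|B i j :&: B i' j'|)%N = (i != i') || (j == j').

Definition grid : {set {set U}} := [set B i j | i : 'I_p, j : 'I_p].
Definition grid_row (i : 'I_p) : {set {set U}} := [set B i j | j : 'I_p].
Definition grid_col (j : 'I_p) : {set {set U}} := [set B i j | i : 'I_p].

Lemma B_inj i j i' j' : B i j = B i' j' -> i = i' /\ j = j'.
Proof.
move=> eB; have := meetB i' j' i j; rewrite -eB meetB !eqxx orbT.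
have [ei _|nii _] := eqVneq i' i.
  subst i'; split=> //; apply/eqP.
  by have := meetB i j i j'; rewrite -eB meetB !eqxx.
have [j2 nj] := exists_ord_neq j p_gt1.
have := meetB i j2 i' j'; rewrite -eB meetB eqxx (negbTE nj).
by rewrite eq_sym nii.
Qed.

Lemma grid_row_sub i : grid_row i \subset grid.
Proof. by apply/subsetP => _ /imsetP[j _ ->]; apply/imset2P; exists i j. Qed.

Lemma grid_col_sub j : grid_col j \subset grid.
Proof. by apply/subsetP => _ /imsetP[i _ ->]; apply/imset2P; exists i j. Qed.

Lemma card_grid_row i : #|grid_row i| = p.
Proof. by rewrite card_imset ?card_ord // => j j' /B_inj[]. Qed.

Lemma card_grid_col j : #|grid_col j| = p.
Proof. by rewrite card_imset ?card_ord // => i i' /B_inj[]. Qed.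

Lemma t_intersecting_grid_col j : t_intersecting t (grid_col j).
Proof.
apply/forallP => X; apply/implyP => /imsetP[i _ ->].
apply/forallP => Y; apply/implyP => /imsetP[i' _ ->].
by rewrite meetB eqxx orbT implybT.
Qed.

Lemma meet_grid_row i i' X Y : X \in grid_row i -> Y \in grid_row i' ->
  (t <= #|X :&: Y|)%N = (i != i') || (X == Y).
Proof.
move=> /imsetP[j _ ->] /imsetP[j' _ ->]; rewrite meetB.
have [<-|] //= := eqVneq i i'.
by apply/eqP/eqP => [-> // | /B_inj[]].
Qed.

Lemma grid_row_disjoint i i' : i != i' -> [disjoint grid_row i & grid_row i'].
Proof.
move=> nii; rewrite -setI_eq0; apply/eqP/setP => X; rewrite !inE.
apply/negP => /andP[/imsetP[j _ ->] /imsetP[j' _ /B_inj[eii _]]].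
by rewrite eii eqxx in nii.
Qed.

Lemma card_by_rows (Y : {set {set U}}) : Y \subset grid ->
  #|Y| = (\sum_i #|Y :&: grid_row i|)%N.
Proof.
move=> sYg; have {1}-> : Y = \bigcup_i (Y :&: grid_row i).
  apply/setP => X; apply/idP/bigcupP => [XY | [i _ /setIP[] //]].
  have /imset2P[i j _ _ eX] := subsetP sYg X XY.
  by exists i => //; rewrite inE XY eX imset_f.
rewrite -sum1_card partition_disjoint_bigcup => [|i i' nii].
  by apply: eq_bigr => i _; rewrite sum1_card.
apply: disjointWl (subsetIr _ _) (disjointWr (subsetIr _ _) _).
exact: grid_row_disjoint.
Qed.

Lemma card_grid : #|grid| = (p * p)%N.
Proof.
rewrite card_by_rows // (eq_bigr (fun _ => p)) ?sum_nat_const ?card_ord // => i _.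
by rewrite (setIidPr (grid_row_sub i)) card_grid_row.
Qed.

Lemma t_intersecting_grid_row_le1 (G : {set {set U}}) i :
  t_intersecting t G -> (#|G :&: grid_row i| <= 1)%N.
Proof.
move=> /forallP tG; apply/card_le1_eqP => X Y /setIP[XG Xi] /setIP[YG Yi].
apply/eqP/negPn/negP => nXY.
move/implyP: (tG Y) => /(_ YG) /forallP /(_ X) /implyP /(_ XG) /implyP /(_ nXY).
by rewrite (meet_grid_row Yi Xi) eqxx (negbTE nXY).
Qed.

Lemma t_intersecting_grid_card_le (G : {set {set U}}) :
  G \subset grid -> t_intersecting t G -> (#|G| <= p)%N.
Proof.
move=> sGg tG; rewrite card_by_rows //.
apply: (@leq_trans (\sum_(i < p) 1)); last by rewrite sum1_card card_ord.
by apply: leq_sum => i _; apply: t_intersecting_grid_row_le1.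
Qed.

Lemma lsize_grid : lsize grid t = p.
Proof.
apply/eqP; rewrite eqn_leq; apply/andP; split.
  by apply/bigmax_leqP => G /andP[]; rewrite powersetE; apply: t_intersecting_grid_card_le.
rewrite -{1}(card_grid_col (Ordinal (ltnW p_gt1))); apply: leq_bigmax_cond.
by rewrite powersetE grid_col_sub t_intersecting_grid_col.
Qed.

Lemma fam_plus_grid_row_uniq (A : {set {set U}}) i X Y :
  X \in fam_plus A t -> X \in grid_row i -> Y \in A -> Y \in grid_row i -> Y = X.
Proof.
rewrite inE => /andP[_ /forallP XA] Xi YA Yi; apply/eqP/negPn/negP => nYX.
have := XA Y; rewrite !inE nYX YA /= (meet_grid_row Xi Yi) eqxx /=.
by rewrite eq_sym (negbTE nYX).
Qed.

Lemma fam_grid_row_bound (A : {set {set U}}) i : A \subset grid ->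
  (#|fam_minus A t :&: grid_row i| + p * #|fam_plus A t :&: grid_row i| <= p)%N.
Proof.
move=> sAg; have [->|[X /setIP[XP Xi]]] := set_0Vmem (fam_plus A t :&: grid_row i).
  by rewrite cards0 muln0 addn0 -(card_grid_row i) subset_leq_card ?subsetIr.
have XA : X \in A by move: XP; rewrite inE => /andP[].
have uniq_row Y : Y \in A -> Y \in grid_row i -> Y = X.
  exact: fam_plus_grid_row_uniq.
have -> : fam_minus A t :&: grid_row i = set0.
  apply/setP => Y; rewrite in_set0; apply/negbTE/negP => /setIP[/setDP[YA nYP] Yi].
  by rewrite (uniq_row Y YA Yi) XP in nYP.
rewrite cards0 add0n -[leqRHS]muln1 leq_mul2l; apply/orP; right.
apply: (leq_trans _ (eq_leq (cards1 X))).
apply/subset_leq_card/subsetP => Y /setIP[YP Yi].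
by rewrite inE (uniq_row Y) //; move: YP; rewrite inE => /andP[].
Qed.

Lemma fam_grid_bound (A : {set {set U}}) : A \subset grid ->
  (#|fam_minus A t| + p * #|fam_plus A t| <= p * p)%N.
Proof.
move=> sAg; have sPA : fam_plus A t \subset A by apply/subsetP => X; rewrite inE => /andP[].
rewrite !card_by_rows ?(subset_trans (subsetDl _ _)) ?(subset_trans sPA) //.
rewrite big_distrr -big_split /=.
apply: (@leq_trans (\sum_(i < p) p)); last by rewrite sum_nat_const card_ord.
by apply: leq_sum => i _; apply: fam_grid_row_bound.
Qed.

Lemma beta_at_grid_ge (A : {set {set U}}) : A \subset grid ->
  (p%:R)^-1 <= beta_at grid t A.
Proof.
move=> sAg; have p_gt0 : 0 < p%:R :> rat by rewrite ltr0n ltnW.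
rewrite /beta_at lsize_grid card_grid natrM invfM mulrA divff ?gt_eqF // mul1r.
case: ifP => [|_ //]; rewrite -card_gt0 => minus_gt0.
have := fam_grid_bound sAg; rewrite -(ler_nat rat) natrD !natrM.
rewrite ler_pdivlMr ?ltr0n // => h; rewrite mulrC ler_pdivrMr //; nra.
Qed.

Lemma beta_grid : beta grid t = (p%:R)^-1.
Proof.
have p_gt0 : 0 < p%:R :> rat by rewrite ltr0n ltnW.
have beta_empty : (lsize grid t)%:R / #|grid|%:R = (p%:R)^-1 :> rat.
  by rewrite lsize_grid card_grid natrM invfM mulrA divff ?gt_eqF // mul1r.
rewrite /beta beta_empty; apply/eqP; rewrite eq_le; apply/andP; split.
  by apply: (big_rec (fun x => x <= _)) => // A x _; rewrite ge_min => ->; rewrite orbT.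
apply: (big_ind (fun x => _ <= x)) => // [x y|A]; first by rewrite le_min => -> ->.
by rewrite powersetE; apply: beta_at_grid_ge.
Qed.

Lemma kappa_grid : kappa grid t = p%:R.
Proof. by rewrite /kappa beta_grid invrK. Qed.

Section CrossIntersecting.
Variables (k : nat) (Bs : 'I_k -> {set {set U}}).
Hypothesis sBsg : forall i, Bs i \subset grid.
Hypothesis crossBs : cross_t_intersecting t Bs.

Lemma cross_grid_row_excl i j s : i != j ->
  (1 < #|Bs i :&: grid_row s|)%N -> Bs j :&: grid_row s = set0.
Proof.
move=> nij /card_gt1P[X [X' [/setIP[XBs Xs] /setIP[X'Bs X's] nXX']]].
apply/setP => Y; rewrite in_set0; apply/negbTE/negP => /setIP[YBs Ys].
have same Z : Z \in Bs i -> Z \in grid_row s -> Z = Y.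
  move=> ZBs Zs; apply/eqP.
  by have := crossBs nij ZBs YBs; rewrite (meet_grid_row Zs Ys) eqxx.
by rewrite (same X) // (same X') ?eqxx in nXX'.
Qed.

Lemma cross_grid_row_sum s : (p <= k)%N ->
  (\sum_(i < k) #|Bs i :&: grid_row s| <= k)%N.
Proof.
move=> p_le_k.
have [i hi|small] := pickP (fun i => 1 < #|Bs i :&: grid_row s|)%N.
  rewrite (bigD1 i) //= big1 ?addn0 => [|j nji]; last first.
    by rewrite (cross_grid_row_excl _ hi) ?cards0 // eq_sym.
  by rewrite (leq_trans _ p_le_k) // -(card_grid_row s) subset_leq_card ?subsetIr.
rewrite -[leqRHS]card_ord -sum1_card leq_sum // => i _.
by have := small i; rewrite /= ltnNge => /negbFE.
Qed.

Lemma cross_grid_prod_le : (p <= k)%N -> (\prod_(i < k) #|Bs i| <= p ^ k)%N.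
Proof.
move=> p_le_k; apply: prod_leq_expn_of_sum.
rewrite (eq_bigr _ (fun i _ => card_by_rows (sBsg i))) exchange_big /=.
rewrite mulnC -[X in (X * _)%N]card_ord -sum_nat_const.
by apply: leq_sum => s _; apply: cross_grid_row_sum.
Qed.
End CrossIntersecting.

Lemma exists_cross_grid_prod_gt k : (0 < k)%N -> (k < p)%N ->
  exists2 Bs : 'I_k -> {set {set U}},
    (forall i, Bs i \subset grid) /\ cross_t_intersecting t Bs &
    (p ^ k < \prod_(i < k) #|Bs i|)%N.
Proof.
case: k => [//|k] _ kp; have p_gt0 := ltnW p_gt1.
pose Bs (i : 'I_k.+1) := \bigcup_(s : 'I_p | (s %% k.+1 == i)%N) grid_row s.
have row_sub (i : 'I_k.+1) (s : 'I_p) : (s %% k.+1)%N = i -> grid_row s \subset Bs i.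
  by move=> e; apply: bigcup_sup; rewrite e.
have card_Bs_ge i : (p <= #|Bs i|)%N.
  rewrite -(card_grid_row (widen_ord (ltnW kp) i)) subset_leq_card // row_sub //=.
  by rewrite modn_small.
have card_Bs0_ge : (p + p <= #|Bs ord0|)%N.
  pose s0 : 'I_p := Ordinal p_gt0; pose sk : 'I_p := Ordinal kp.
  have /eqP disj : grid_row s0 :&: grid_row sk == set0.
    by rewrite setI_eq0 grid_row_disjoint.
  apply: leq_trans (subset_leq_card (_ : grid_row s0 :|: grid_row sk \subset _)).
    by rewrite cardsU disj cards0 subn0 !card_grid_row.
  by rewrite subUset !row_sub //= ?mod0n ?modnn.
exists Bs; first split=> [i|i j nij X Y].
- by apply/bigcupsP => s _; apply: grid_row_sub.
- move=> /bigcupP[s /eqP si Xs] /bigcupP[s' /eqP s'j Ys].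
  rewrite (meet_grid_row Xs Ys); apply/orP; left.
  by apply: contraNneq nij => ess'; apply/eqP/val_inj; rewrite /= -si -s'j ess'.
rewrite big_ord_recl expnS.
apply: (@leq_trans ((p + p) * p ^ k)).
  by rewrite ltn_mul2r expn_gt0 p_gt0 -{1}[p]addn0 ltn_add2l.
apply: leq_mul card_Bs0_ge _; rewrite -{1}(card_ord k) -prod_nat_const.
by apply: leq_prod => i _; apply: card_Bs_ge.
Qed.
End Grid.

Section Lines.
Variables (R : realType) (t p : nat) (m c : 'I_p -> R).
Variables (U : finType) (T : R * R -> {set U}).
Hypotheses (m_inj : injective m) (c_inj : injective c).
Hypothesis card_T : forall P, inA m c P -> #|T P| = t.
Hypothesis T_disjoint :
  forall P Q, inA m c P -> inA m c Q -> P != Q -> [disjoint T P & T Q].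

Lemma Aij_inA i j P : Aij m c i j P -> inA m c P.
Proof. by move=> AP; apply/existsP; exists i; apply/existsP; exists j. Qed.

Lemma T_sub_Bij i j P : Aij m c i j P -> T P \subset Bij m c T i j.
Proof. by move=> AP; apply/subsetP => u uP; rewrite inE; apply/asboolP; exists P. Qed.

Lemma Aij_nonparallel i j i' j' : i != i' ->
  exists P, Aij m c i j P /\ Aij m c i' j' P.
Proof.
move=> nii; have dm : m i - m i' != 0 by rewrite subr_eq0 (inj_eq m_inj).
pose x := (c j' - c j) / (m i - m i'); pose P := (x, m i * x + c j).
have Li : P \in Lij m c i j by rewrite unfold_in /Lij /line /=.
have Li' : P \in Lij m c i' j'.
  have hx : m i * x - m i' * x = c j' - c j by rewrite -mulrBl /x mulrC divfK.
  by rewrite unfold_in /Lij /line /=; apply/eqP; lra.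
have nij : (i, j) != (i', j') by rewrite xpair_eqE negb_and nii.
exists P; split; apply/existsP.
  by exists i'; apply/existsP; exists j'; rewrite eq_sym nij Li Li'.
by exists i; apply/existsP; exists j; rewrite nij Li Li'.
Qed.

Lemma Bij_meet_nonparallel i j i' j' : i != i' ->
  (t <= #|Bij m c T i j :&: Bij m c T i' j'|)%N.
Proof.
move=> /(Aij_nonparallel j j')[P [AP AP']].
rewrite -(card_T (Aij_inA AP)) subset_leq_card // subsetI.
by rewrite (T_sub_Bij AP) (T_sub_Bij AP').
Qed.

Lemma Bij_parallel_disjoint i j j' : j != j' ->
  [disjoint Bij m c T i j & Bij m c T i j'].
Proof.
move=> njj; rewrite -setI_eq0; apply/eqP/setP => u; rewrite !inE.
apply/negbTE/andP => -[/asboolP[P [AP uP]] /asboolP[Q [AQ uQ]]].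
have [ePQ|nPQ] := eqVneq P Q; last first.
  have := T_disjoint (Aij_inA AP) (Aij_inA AQ) nPQ.
  by move/disjointFr/(_ uP); rewrite uQ.
subst Q; move: AP AQ => /existsP[_ /existsP[_ /and3P[_ LP _]]].
move=> /existsP[_ /existsP[_ /and3P[_ LP' _]]].
move: LP LP'; rewrite !unfold_in /Lij /line => /eqP-> /eqP/addrI/c_inj ejj.
by rewrite ejj eqxx in njj.
Qed.

Lemma Bij_meet : (0 < t)%N -> (1 < p)%N -> forall i j i' j',
  (t <= #|Bij m c T i j :&: Bij m c T i' j'|)%N = (i != i') || (j == j').
Proof.
move=> t_gt0 p_gt1 i j i' j'.
have [<-|nii] /= := eqVneq i i'; last exact: Bij_meet_nonparallel.
have [<-|njj] := eqVneq j j'.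
  have [i2 ni2] := exists_ord_neq i p_gt1.
  have ii2 : i != i2 by rewrite eq_sym.
  by rewrite setIid (leq_trans (Bij_meet_nonparallel j j ii2)) ?subset_leq_card ?subsetIl.
move/(Bij_parallel_disjoint i): njj; rewrite -setI_eq0 => /eqP->.
by rewrite cards0 leqNgt t_gt0.
Qed.
End Lines.

Unset Implicit Arguments.

Theorem theorem5p4 (R : realType) (t p : nat) (m c : 'I_p -> R)
  (U : finType) (T : R * R -> {set U})
  (L : {set {set U}}) (k : nat) (As : 'I_k -> {set {set U}}) :
  (1 <= t)%N -> (3 <= p)%N ->
  injective m -> injective c ->
  (forall P, inA m c P -> #|T P| = t) ->
  (forall P Q, inA m c P -> inA m c Q -> P != Q -> [disjoint T P & T Q]) ->
  L \subset Bfam m c T -> t_intersecting t L ->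
  (forall G : {set {set U}}, G \subset Bfam m c T -> t_intersecting t G -> (#|G| <= #|L|)%N) ->
  (1 <= k)%N ->
  (forall i, As i \subset Bfam m c T) -> cross_t_intersecting t As ->
  [/\ kappa (Bfam m c T) t = p%:R /\ #|L| = p,
      (kappa (Bfam m c T) t <= k%:R -> (forall i, As i = L) ->
        forall Bs : 'I_k -> {set {set U}},
          (forall i, Bs i \subset Bfam m c T) -> cross_t_intersecting t Bs ->
          (\prod_(i < k) #|Bs i| <= \prod_(i < k) #|As i|)%N)
    & (k%:R < kappa (Bfam m c T) t -> (forall i, As i = L) ->
        exists2 Bs : 'I_k -> {set {set U}},
          (forall i, Bs i \subset Bfam m c T) /\ cross_t_intersecting t Bs &
          (\prod_(i < k) #|As i| < \prod_(i < k) #|Bs i|)%N)].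
Proof.
move=> t_gt0 p_ge3 m_inj c_inj card_T T_disj sLB tL L_max k_gt0 _ _.
have p_gt1 : (1 < p)%N by apply: leq_trans p_ge3.
have meetB := Bij_meet m_inj c_inj card_T T_disj t_gt0 p_gt1.
have gridB : Bfam m c T = grid (Bij m c T) by [].
rewrite gridB (kappa_grid p_gt1 meetB) in sLB L_max *.
have card_L : #|L| = p.
  apply/eqP; rewrite eqn_leq (t_intersecting_grid_card_le p_gt1 meetB sLB tL).
  rewrite -(lsize_grid p_gt1 meetB); apply/bigmax_leqP => G /andP[].
  by rewrite powersetE; apply: L_max.
have prod_L : (forall i, As i = L) -> (\prod_(i < k) #|As i| = p ^ k)%N.
  move=> AsL; rewrite (eq_bigr (fun _ => p)) ?prod_nat_const ?card_ord //.
  by move=> i _; rewrite AsL.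
split=> [//|p_le_k AsL Bs sBsB crossBs|k_lt_p AsL].
  by rewrite prod_L // (cross_grid_prod_le p_gt1 meetB sBsB crossBs) // -(ler_nat rat).
rewrite prod_L //; apply: (exists_cross_grid_prod_gt p_gt1 meetB k_gt0).
by rewrite -(ltr_nat rat).
Qed.
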